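(* Let $\pi$ be a probability vector on $[K]$, let $\ell\in[-1,1]^K$ be fixed, and let $A\sim\pi$. Then for every $i\in[K]$, $$\mathbb{E}\left[\left(\ell_i\mathbb{I}(A=i)-\frac{\pi_i\sqrt{\pi_A}\,\ell_A}{\sum_{j=1}^K\pi_j^{3/2}}\right)^2\right]\le 5\,\pi_i(1-\pi_i).$$
   Context: The expectation is over $A\sim\pi$ only. *)

From mathcomp Require Import all_boot all_order all_algebra.
Set Implicit Arguments. Unset Strict Implicit. Unset Printing Implicit Defensive.
Import Order.TTheory GRing.Theory Num.Theory.
Local Open Scope ring_scope.

Definition prob_vec (R : realFieldType) (K : nat) (pi : 'I_K -> R) : Prop :=
  (forall a, 0 <= pi a) /\ \sum_(a < K) pi a = 1.

Definition expect (R : realFieldType) (K : nat) (pi : 'I_K -> R) (f : 'I_K -> R) : R :=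
  \sum_(a < K) pi a * f a.

Definition pow32 (R : rcfType) (x : R) : R := x * Num.sqrt x.

From mathcomp Require Import all_boot all_order all_algebra.
From mathcomp Require Import ring lra.
Set Implicit Arguments. Unset Strict Implicit. Unset Printing Implicit Defensive.
Import Order.TTheory GRing.Theory Num.Theory.
Local Open Scope ring_scope.

(* Write p = pi_i, T = sum_(a <> i) pi_a^(3/2), so that S := sum_j pi_j^(3/2)
   = p^(3/2) + T, and Q = sum_(a <> i) pi_a^2.  The i-th term of the expectation
   is p l_i^2 (T / S)^2 and the others are p^2 pi_a^2 l_a^2 / S^2, so for |l| <= 1
   the expectation is at most (p T^2 + p^2 Q) / S^2.  Clearly T <= 1 - p and
   Q <= (1 - p)^2; moreover p pi_a^2 = pi_a^(3/2) (p sqrt pi_a) with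
   p sqrt pi_a <= 2 p^(3/2) + T, so p Q <= T (2 p^(3/2) + T).  Case splits on the
   size of p turn these into T^2 <= 3 (1 - p) S^2 and p Q <= 2 (1 - p) S^2. *)

Lemma sqr_tail_le (R : realFieldType) (p s T : R) :
  0 <= p -> p <= 1 -> 0 <= s -> s * s = p -> 0 <= T -> T <= 1 - p ->
  T ^+ 2 <= 3 * (1 - p) * (p * s + T) ^+ 2.
Proof.
rewrite !expr2 => p_ge0 p_le1 s_ge0 sqr_s T_ge0 T_le.
have u_ge0 : 0 <= p * s by exact: mulr_ge0.
have [p_small | p_big] := lerP p (2 / 3).
  have : T * T <= (p * s + T) * (p * s + T) by apply: ler_pM => //; lra.
  by move: ((p * s + T) * (p * s + T)) => V; nra.
have s_big : 4 / 5 <= s by nra.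
have u_big : 1 <= 6 * (p * s) by nra.
have : T <= 3 * ((p * s + T) * (p * s + T)).
  by move: u_big u_ge0; move: (p * s) => u u1 u0; nra.
by move: ((p * s + T) * (p * s + T)) => V; nra.
Qed.

Lemma cross_tail_le (R : realFieldType) (p s T W : R) :
  0 <= p -> p <= 1 -> 0 <= s -> s * s = p -> 0 <= T ->
  W <= T * (2 * p * s + T) -> W <= p * (1 - p) ^+ 2 ->
  W <= 2 * (1 - p) * (p * s + T) ^+ 2.
Proof.
rewrite !expr2 => p_ge0 p_le1 s_ge0 sqr_s T_ge0 W_leT W_lep.
have u_ge0 : 0 <= p * s by exact: mulr_ge0.
have cube_le : p * p * p <= (p * s + T) * (p * s + T).
  have -> : p * p * p = (p * s) * (p * s) by rewrite -sqr_s; ring.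
  by apply: ler_pM => //; lra.
have cross_le : T * (2 * p * s + T) <= (p * s + T) * (p * s + T).
  by move: u_ge0; rewrite -mulrA; move: (p * s) => u u0; nra.
have V_ge0 : 0 <= (p * s + T) * (p * s + T) by apply: mulr_ge0; lra.
move: cube_le cross_le V_ge0; move: ((p * s + T) * (p * s + T)) => V cube_le cross_le V_ge0.
have [p_small | p_big] := lerP p (1 / 2).
  by move: W_leT cross_le; move: (T * (2 * p * s + T)) => X; nra.
have : (1 - p) * (1 - p) <= (1 - p) * (2 * p * p) by apply: ler_wpM2l; nra.
nra.
Qed.

Lemma pow32_eq0 (R : rcfType) (x : R) : 0 <= x -> (pow32 x == 0) = (x == 0).
Proof.
move=> x_ge0; rewrite /pow32 mulf_eq0 sqrtr_eq0 orb_idr // => x_le0.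
by rewrite eq_le x_le0 x_ge0.
Qed.

Section ProbabilityVector.
Variables (R : rcfType) (K : nat) (pi : 'I_K -> R).
Hypothesis pi_vec : prob_vec pi.
Variable i : 'I_K.

Local Notation S := (\sum_(j < K) pow32 (pi j)).
Local Notation T := (\sum_(a | a != i) pow32 (pi a)).
Local Notation Q := (\sum_(a | a != i) pi a ^+ 2).

Lemma prob_vec_ge0 a : 0 <= pi a.
Proof. by case: pi_vec. Qed.

Lemma sqrt_mul_self a : Num.sqrt (pi a) * Num.sqrt (pi a) = pi a.
Proof. by rewrite -expr2 sqr_sqrtr // prob_vec_ge0. Qed.

Lemma pow32_ge0 a : 0 <= pow32 (pi a).
Proof. by rewrite mulr_ge0 ?sqrtr_ge0 ?prob_vec_ge0. Qed.

Lemma term_le_sum_neq (F : 'I_K -> R) a :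
  (forall b, 0 <= F b) -> a != i -> F a <= \sum_(b | b != i) F b.
Proof. by move=> F_ge0 ai; rewrite (bigD1 a) //= lerDl sumr_ge0. Qed.

Lemma sum_neq_prob : \sum_(a | a != i) pi a = 1 - pi i.
Proof. by case: pi_vec => _ <-; rewrite [in RHS](bigD1 i) //= addrAC subrr add0r. Qed.

Lemma prob_neq_le a : a != i -> pi a <= 1 - pi i.
Proof. by rewrite -sum_neq_prob; apply: term_le_sum_neq prob_vec_ge0. Qed.

Lemma prob_vec_le1 a : pi a <= 1.
Proof.
case: (pi_vec) => _ <-; rewrite (bigD1 a) //= lerDl.
by apply: sumr_ge0 => b _; exact: prob_vec_ge0.
Qed.

Lemma sqrt_prob_le1 a : Num.sqrt (pi a) <= 1.
Proof. by rewrite -sqrtr1 ler_wsqrtr ?prob_vec_le1. Qed.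

Lemma sum_pow32E : S = pow32 (pi i) + T.
Proof. exact: bigD1. Qed.

Lemma sum_pow32_gt0 : 0 < S.
Proof.
rewrite lt_def sumr_ge0 ?andbT => [|a _]; last exact: pow32_ge0.
apply: contra_neq (oner_neq0 R) => /(psumr_eq0P (fun a _ => pow32_ge0 a)) S0.
case: pi_vec => _ <-; apply: big1 => a _.
by apply/eqP; rewrite -pow32_eq0 ?prob_vec_ge0 ?S0.
Qed.

Lemma tail_ge0 : 0 <= T.
Proof. by apply: sumr_ge0 => a _; exact: pow32_ge0. Qed.

Lemma tail_le : T <= 1 - pi i.
Proof.
rewrite -sum_neq_prob; apply: ler_sum => a _.
by apply: ler_piMr; [exact: prob_vec_ge0 | exact: sqrt_prob_le1].
Qed.

Lemma sqr_sum_neq_le : Q <= (1 - pi i) ^+ 2.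
Proof.
rewrite expr2 -{1}sum_neq_prob mulr_suml; apply: ler_sum => a ai.
by rewrite expr2 ler_wpM2l ?prob_vec_ge0 ?prob_neq_le.
Qed.

(* If sqrt pi_a > 2 sqrt p then pi_a > p, so p sqrt pi_a <= pi_a^(3/2) <= T. *)
Lemma mul_sqrt_neq_le a : a != i ->
  pi i * Num.sqrt (pi a) <= 2 * pi i * Num.sqrt (pi i) + T.
Proof.
move=> ai; have p_ge0 := prob_vec_ge0 i; have sp_ge0 := sqrtr_ge0 (pi i).
have ps_ge0 : 0 <= pi i * Num.sqrt (pi i) by exact: mulr_ge0.
have T_ge0 := tail_ge0.
have [sa_le | sa_gt] := lerP (Num.sqrt (pi a)) (2 * Num.sqrt (pi i)).
  have : pi i * Num.sqrt (pi a) <= pi i * (2 * Num.sqrt (pi i)).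
    exact: ler_wpM2l.
  lra.
have pi_le : pi i <= pi a.
  by rewrite -sqrt_mul_self -(sqrt_mul_self a); nra.
have := term_le_sum_neq pow32_ge0 ai.
have : pi i * Num.sqrt (pi a) <= pow32 (pi a) by rewrite ler_wpM2r ?sqrtr_ge0.
lra.
Qed.

Lemma cross_sum_neq_le :
  pi i * Q <= T * (2 * pi i * Num.sqrt (pi i) + T).
Proof.
rewrite mulr_sumr mulr_suml; apply: ler_sum => a ai.
have -> : pi i * pi a ^+ 2 = pow32 (pi a) * (pi i * Num.sqrt (pi a)).
  by rewrite /pow32 expr2 -{2}(sqrt_mul_self a); ring.
by apply: ler_wpM2l; [exact: pow32_ge0 | exact: mul_sqrt_neq_le].
Qed.

Lemma expect_le (l : 'I_K -> R) : (forall a, -1 <= l a <= 1) ->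
  expect pi (fun A => (l i * (A == i)%:R
      - pi i * Num.sqrt (pi A) * l A / S) ^+ 2)
  <= (pi i * T ^+ 2 + pi i ^+ 2 * Q) / S ^+ 2.
Proof.
move=> l_bnd; have S_neq0 : S != 0 by rewrite gt_eqF ?sum_pow32_gt0.
have sqr_l_le1 a : l a ^+ 2 <= 1 by case/andP: (l_bnd a) => *; nra.
rewrite /expect (bigD1 i) //= eqxx mulrDl mulr_sumr lerD //.
  have -> : pi i * (l i * 1%:R - pi i * Num.sqrt (pi i) * l i / S) ^+ 2
          = pi i * T ^+ 2 / S ^+ 2 * l i ^+ 2.
    by move: S_neq0; rewrite !sum_pow32E /pow32 => ?; field.
  apply: ler_piMr (sqr_l_le1 i).
  by apply: divr_ge0; [exact: mulr_ge0 (prob_vec_ge0 i) (sqr_ge0 _) | exact: sqr_ge0].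
rewrite big_distrl /=; apply: ler_sum => a ai; rewrite (negbTE ai).
have -> : pi a * (l i * 0%:R - pi i * Num.sqrt (pi a) * l a / S) ^+ 2
        = pi i ^+ 2 * (pi a * (Num.sqrt (pi a) * Num.sqrt (pi a))) / S ^+ 2 * l a ^+ 2.
  by field.
rewrite sqrt_mul_self -expr2.
apply: ler_piMr (sqr_l_le1 a).
by apply: divr_ge0; [exact: mulr_ge0 (sqr_ge0 _) (sqr_ge0 _) | exact: sqr_ge0].
Qed.

End ProbabilityVector.

Theorem mainTheorem8 (R : rcfType) (K : nat) (pi : 'I_K -> R) (l : 'I_K -> R)
  (hpi : prob_vec pi) (hl : forall a, -1 <= l a <= 1) (i : 'I_K) :
  expect pi (fun A => (l i * (A == i)%:R
      - pi i * Num.sqrt (pi A) * l A / (\sum_(j < K) pow32 (pi j))) ^+ 2)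
  <= 5 * pi i * (1 - pi i).
Proof.
apply: le_trans (expect_le hpi i hl) _.
rewrite ler_pdivrMr ?exprn_gt0 ?sum_pow32_gt0 // (sum_pow32E _ i) /pow32.
have p_ge0 := prob_vec_ge0 hpi i; have p_le1 := prob_vec_le1 hpi i.
have s_ge0 := sqrtr_ge0 (pi i); have sqr_s := sqrt_mul_self hpi i.
have T2 := sqr_tail_le p_ge0 p_le1 s_ge0 sqr_s (tail_ge0 hpi i) (tail_le hpi i).
have pQ := cross_tail_le p_ge0 p_le1 s_ge0 sqr_s (tail_ge0 hpi i)
  (cross_sum_neq_le hpi i) (ler_wpM2l p_ge0 (sqr_sum_neq_le hpi i)).
have := ler_wpM2l p_ge0 T2; have := ler_wpM2l p_ge0 pQ.
move: (\sum_(a | a != i) pow32 (pi a)) (\sum_(a | a != i) pi a ^+ 2) => T Q.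
rewrite !expr2; nra.
Qed.
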